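(* For any continuous map $T:X\to X$ of a compact metric space $X$, the set $Per(T)$ of periodic points is either empty or satisfies $h_{top}(T,Per(T))=0$.
   Context: $h_{top}(T,Z)$ denotes Bowen's topological entropy of an arbitrary subset $Z\subseteq X$: with $B_m(x,\varepsilon)=\{y:d(T^jx,T^jy)\le\varepsilon,0\le j<m\}$, $C(Z;t,n,\varepsilon)=\inf\sum_i2^{-tm_i}$ over countable covers of $Z$ by $B_{m_i}(x_i,\varepsilon)$ with $m_i\ge n$, $h(Z,\varepsilon)=\inf\{t:\lim_nC(Z;t,n,\varepsilon)=0\}$, $h_{top}(T,Z)=\lim_{\varepsilon\to0}h(Z,\varepsilon)$. *)

From HB Require Import structures.
From mathcomp Require Import all_boot all_order all_algebra.
From mathcomp Require Import all_classical all_reals all_analysis.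
Set Implicit Arguments. Unset Strict Implicit. Unset Printing Implicit Defensive.
Import Order.TTheory GRing.Theory Num.Theory.
Local Open Scope classical_set_scope.
Local Open Scope ring_scope.

Section Bowen.
Variables (R : realType) (X : Type) (d : X -> X -> R) (T : X -> X).

Definition is_metric : Prop :=
  (forall x y, d x y = 0 <-> x = y) /\ (forall x y, d x y = d y x) /\
  (forall x y z, d x z <= d x y + d y z).

Definition mopen (U : set X) : Prop :=
  forall x, U x -> exists2 e : R, 0 < e & forall y, d x y < e -> U y.

Definition mcompact : Prop :=
  forall (I : Type) (U : I -> set X), (forall i, mopen (U i)) ->
    setT `<=` \bigcup_i U i ->
    exists F : set I, finite_set F /\ setT `<=` \bigcup_(i in F) U i.

Definition mcontinuous : Prop :=
  forall x (e : R), 0 < e -> exists2 del : R, 0 < del &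
    forall y, d x y < del -> d (T x) (T y) < e.

Definition Per : set X := [set x | exists n, (0 < n)%N /\ iter n T x = x].

Definition bowen_ball (m : nat) (x : X) (eps : R) : set X :=
  [set y | forall j, (j < m)%N -> d (iter j T x) (iter j T y) <= eps].

(** a countable (possibly finite or empty) family of Bowen balls:
    [c i = Some (x_i, m_i)] is the ball B_{m_i}(x_i, eps), [None] = no ball *)
Definition is_bowen_cover (Z : set X) (n : nat) (eps : R)
  (c : nat -> option (X * nat)) : Prop :=
  (Z `<=` [set y | exists i x m, c i = Some (x, m) /\ bowen_ball m x eps y]) /\
  (forall i x m, c i = Some (x, m) -> (n <= m)%N).

Definition cover_cost (t : R) (c : nat -> option (X * nat)) : \bar R :=
  (\sum_(i <oo) (match c i with
                 | Some (_, m) => ((2 : R) `^ (- t * m%:R))%:E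
                 | None => 0%E end))%E.

Definition bowenC (Z : set X) (t : R) (n : nat) (eps : R) : \bar R :=
  ereal_inf [set cover_cost t c | c in is_bowen_cover Z n eps].

Definition bowen_h (Z : set X) (eps : R) : \bar R :=
  ereal_inf [set t%:E | t in [set t : R | bowenC Z t n eps @[n --> \oo] --> 0%E]].

End Bowen.

From HB Require Import structures.
From mathcomp Require Import all_boot all_order all_algebra.
From mathcomp Require Import all_classical all_reals all_analysis lra.
Set Implicit Arguments. Unset Strict Implicit. Unset Printing Implicit Defensive.
Import Order.TTheory GRing.Theory Num.Theory.
Local Open Scope classical_set_scope.
Local Open Scope ring_scope.

(* The points of period k are covered by countably many Bowen balls
   B_k(z, eps) centred at points z of period k (compactness and continuity).
   For two k-periodic points, closeness along the first k iterates is
   closeness along all iterates, so each of these balls is also a ball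
   B_m(z, eps) for every m.  Per(T) is thus covered by countably many Bowen
   balls whose lengths can be chosen freely; choosing the length of the p-th
   ball so large that its cost 2^(-t m_p) is below 2^(-(n+p+1)) makes
   C(Per; t, n, eps) <= 2^(-n) for every t > 0.  For t <= 0 every ball costs
   at least 1, so C(Per; t, n, eps) >= 1 once Per is nonempty. *)

Section BowenEntropyPeriodic.
Variables (R : realType) (X : Type) (d : X -> X -> R) (T : X -> X).

Section Metric.
Hypothesis hd : is_metric d.

Lemma distxx x : d x x = 0.
Proof. by case: hd => h _; apply/h. Qed.

Lemma distC x y : d x y = d y x.
Proof. by case: hd => _ []. Qed.

Lemma dist_triangle x y z : d x z <= d x y + d y z.
Proof. by case: hd => _ [_]. Qed.

Lemma bowen_ball_trans m x y z a b : bowen_ball d T m x a y ->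
  bowen_ball d T m x b z -> bowen_ball d T m y (a + b) z.
Proof.
move=> xy xz j jm; rewrite (le_trans (dist_triangle _ (iter j T x) _)) //.
by rewrite distC lerD //; [exact: xy | exact: xz].
Qed.

Lemma iter_periodic k z : iter k T z = z ->
  forall a r, iter (a * k + r) T z = iter r T z.
Proof.
move=> zk; elim=> [|a IH] r; first by rewrite mul0n add0n.
by rewrite mulSn -addnA addnC iterD zk IH.
Qed.

Lemma periodic_bowen_ball k z y eps : (0 < k)%N ->
  iter k T z = z -> iter k T y = y ->
  bowen_ball d T k z eps y -> forall m, bowen_ball d T m z eps y.
Proof.
move=> k0 zk yk zy m j _.
by rewrite (divn_eq j k) !iter_periodic //; apply: zy; rewrite ltn_mod.
Qed.

Section Continuity.
Hypothesis hT : mcontinuous d T.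

Lemma iter_continuous k x e : 0 < e -> exists2 r, 0 < r &
  forall y, d x y < r -> d (iter k T x) (iter k T y) < e.
Proof.
elim: k e => [|k IH] e e0 /=; first by exists e.
have [r1 r10 H1] := hT (iter k T x) e0.
have [r2 r20 H2] := IH _ r10.
by exists r2 => // y /H2 /H1.
Qed.

Lemma bowen_ball_nbhs k x eps : 0 < eps ->
  exists2 r, 0 < r & forall y, d x y < r -> bowen_ball d T k x eps y.
Proof.
move=> e0; elim: k => [|k [r1 r10 H1]]; first by exists 1.
have [r2 r20 H2] := iter_continuous k x e0.
exists (Num.min r1 r2); first by rewrite lt_min r10 r20.
move=> y; rewrite lt_min => /andP[y1 y2] j.
rewrite ltnS leq_eqVlt => /orP[/eqP->|jk]; first exact/ltW/H2.
exact: H1.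
Qed.

Hypothesis hX : mcompact d.

Lemma bowen_countable_net (x0 : X) k eps : 0 < eps ->
  exists h : nat -> X, forall y, exists i, bowen_ball d T k (h i) eps y.
Proof.
move=> e0.
pose U x : set X :=
  [set y | exists2 r, 0 < r & forall z, d y z < r -> bowen_ball d T k x eps z].
have U_open x : mopen d (U x).
  move=> y [r r0 Hr]; exists (r / 2); first by rewrite divr_gt0.
  move=> z yz; exists (r / 2); first by rewrite divr_gt0.
  move=> w zw; apply: Hr.
  by rewrite (le_lt_trans (dist_triangle y z w)) // [r]splitr ltrD.
have U_cover : setT `<=` \bigcup_x U x.
  by move=> x _; exists x => //; apply: bowen_ball_nbhs.
have [F [/(@finite_seqP {classic X}) [s Fs] FU]] := hX U_open U_cover.
exists (nth x0 s) => y; have [x Fx [r r0 Hr]] := FU y I.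
have xs : x \in s by rewrite Fs in Fx.
exists (@index {classic X} x s); rewrite (@nth_index {classic X} x0 x s xs).
by apply: Hr; rewrite distxx.
Qed.

(* The centres of a net of radius eps/2 are moved into A. *)
Lemma bowen_countable_net_in (x0 : X) (A : set X) k eps : 0 < eps ->
  exists g : nat -> X, forall y, A y ->
    exists i, A (g i) /\ bowen_ball d T k (g i) eps y.
Proof.
move=> e0; have e20 : 0 < eps / 2 by rewrite divr_gt0.
have [h net] := bowen_countable_net x0 k e20.
pose P i z := A z /\ bowen_ball d T k (h i) (eps / 2) z.
have [g Pg] : {g : nat -> X & forall i, (exists z, P i z) -> P i (g i)}.
  apply: (@choice _ _ (fun i z => (exists z, P i z) -> P i z)) => i.
  have [[z Pz]|noz] := EM (exists z, P i z); first by exists z.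
  by exists x0 => /noz.
exists g => y Ay; have [i hy] := net y.
have [Agi hgi] := Pg i (ex_intro _ y (conj Ay hy)).
by exists i; split => //; rewrite [eps]splitr; apply: bowen_ball_trans hgi hy.
Qed.

Lemma Per_bowen_net (x0 : X) eps : 0 < eps ->
  exists G : nat * nat -> X,
    forall y, Per T y -> exists p, forall m, bowen_ball d T m (G p) eps y.
Proof.
move=> e0.
have [g net] : {g : nat -> nat -> X & forall k y, iter k T y = y ->
    exists i, iter k T (g k i) = g k i /\ bowen_ball d T k (g k i) eps y}.
  apply: (@choice _ _ (fun k g => forall y, iter k T y = y ->
    exists i, iter k T (g i) = g i /\ bowen_ball d T k (g i) eps y)) => k.
  exact: bowen_countable_net_in.
exists (fun p => g p.1 p.2) => y [k [k0 yk]].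
have [i [gk gy]] := net k y yk.
by exists (k, i); apply: periodic_bowen_ball gy.
Qed.

End Continuity.
End Metric.

Definition ball_cost (t : R) (b : option (X * nat)) : \bar R :=
  if b is Some (_, m) then ((2 : R) `^ (- t * m%:R))%:E else 0%E.

Lemma cover_costE t c : cover_cost t c = (\sum_(i <oo) ball_cost t (c i))%E.
Proof. by []. Qed.

Lemma ball_cost_ge0 t b : (0 <= ball_cost t b)%E.
Proof. by case: b => [[x m]|] //; rewrite lee_fin powR_ge0. Qed.

Lemma bowenC_ge0 Z t n eps : (0 <= bowenC d T Z t n eps)%E.
Proof.
apply: le_ereal_inf_tmp => _ [c _ <-]; rewrite cover_costE.
by apply: nneseries_ge0 => p _ _; apply: ball_cost_ge0.
Qed.

Lemma sum_geometric_half (n N : nat) :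
  \sum_(0 <= p < N) ((2 : R)^-1) ^+ (n + p).+1 =
  (2^-1) ^+ n - (2^-1) ^+ (n + N).
Proof.
elim: N => [|N IH]; first by rewrite big_geq // addn0 subrr.
by rewrite big_nat_recr //= IH addnS exprS; set a := _ ^+ (n + N); lra.
Qed.

Lemma cover_cost_le_geometric t c (n : nat) :
  (forall p, ball_cost t (c p) <= ((2 : R)^-1 ^+ (n + p).+1)%:E)%E ->
  (cover_cost t c <= ((2 : R)^-1 ^+ n)%:E)%E.
Proof.
move=> cp; rewrite cover_costE.
apply: lime_le; first by apply: is_cvg_nneseries => p _ _; apply: ball_cost_ge0.
apply: nearW => N.
apply: (@le_trans _ _ (\sum_(0 <= p < N) ((2 : R)^-1 ^+ (n + p).+1)%:E)%E).
  by apply: lee_sum => p _; apply: cp.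
rewrite sumEFin sum_geometric_half lee_fin lerBlDr lerDl.
by rewrite exprn_ge0 // invr_ge0.
Qed.

Lemma powR2_le_half (t : R) (K q : nat) : 1 <= t * K%:R ->
  (2 : R) `^ (- t * (K * q)%:R) <= (2^-1) ^+ q.
Proof.
move=> tK; rewrite natrM mulrA mulNr powRrM powR_mulrn ?powR_ge0 //.
apply: lerXn2r; rewrite ?nnegrE ?powR_ge0 ?invr_ge0 //.
have -> : (2 : R)^-1 = 2 `^ (-1) by rewrite powRN powRr1.
by apply: ler_powR; [lra | rewrite lerN2].
Qed.

(* The p-th ball of the cover is given length K (n + p + 1), where K t >= 1. *)
Lemma bowenC_le_geometric (I : countType) (G : I -> X) Z t eps (n : nat) :
  0 < t -> (forall y, Z y -> exists i, forall m, bowen_ball d T m (G i) eps y) ->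
  (bowenC d T Z t n eps <= ((2 : R)^-1 ^+ n)%:E)%E.
Proof.
move=> t0 ZG; pose K := (Num.Def.trunc t^-1).+1.
have tK : 1 <= t * K%:R.
  have := truncnS_gt t^-1; rewrite -(ltr_pM2l t0) mulfV ?gt_eqF //.
  exact: ltW.
pose c p : option (X * nat) :=
  if unpickle p is Some i then Some (G i, (K * (n + p).+1)%N) else None.
have cZ : is_bowen_cover d T Z n eps c.
  split=> [y /ZG [i Gi]|p x m].
    by exists (pickle i), (G i), (K * (n + pickle i).+1)%N; rewrite /c pickleK.
  rewrite /c; case: unpickle => [i [_ <-]|//].
  by rewrite (leq_trans _ (leq_pmull _ (ltn0Sn _))) // ltnW // ltnS leq_addr.
apply: (@le_trans _ _ (cover_cost t c)); first by apply: ereal_inf_lbound; exists c.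
apply: cover_cost_le_geometric => p; rewrite /c.
by case: unpickle => [i|]; rewrite lee_fin ?powR2_le_half // exprn_ge0 ?invr_ge0.
Qed.

Lemma bowenC_ge1 Z t eps y0 n : t <= 0 -> Z y0 ->
  (1 <= bowenC d T Z t n eps)%E.
Proof.
move=> t0 Zy0; apply: le_ereal_inf_tmp => _ [c [cZ _] <-].
have [i [x [m [ci _]]]] := cZ y0 Zy0.
rewrite cover_costE.
apply: le_trans (nneseries_lim_ge i.+1 (fun p _ _ => ball_cost_ge0 t (c p))).
rewrite big_nat_recr //= ci addeC.
apply: le_trans (leeDl _ _); last by apply: sume_ge0 => p _; apply: ball_cost_ge0.
rewrite -(powRr0 2) lee_fin; apply: ler_powR; first lra.
by rewrite mulr_ge0 // oppr_ge0.
Qed.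

Lemma bowen_h_eq0 Z eps y0 : Z y0 ->
  (forall t, 0 < t -> bowenC d T Z t n eps @[n --> \oo] --> 0%E) ->
  bowen_h d T Z eps = 0%E.
Proof.
move=> Zy0 cvg0; apply/eqP; rewrite eq_le; apply/andP; split.
  apply/lee_addgt0Pr => e e0; rewrite add0e.
  by apply: ereal_inf_lbound; exists e => //; apply: cvg0.
apply: le_ereal_inf_tmp => _ [t tcvg <-].
rewrite lee_fin leNgt; apply/negP => t0.
have : (1 <= limn (fun n => bowenC d T Z t n eps))%E.
  apply: lime_ge; first exact: cvgP tcvg.
  by apply: nearW => n; apply: bowenC_ge1 (ltW t0) Zy0.
by rewrite (cvg_lim _ tcvg) // lee_fin ler10.
Qed.

Lemma bowenC_Per_cvg0 (hd : is_metric d) (hT : mcontinuous d T)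
    (hX : mcompact d) (x0 : X) t eps : 0 < t -> 0 < eps ->
  bowenC d T (Per T) t n eps @[n --> \oo] --> 0%E.
Proof.
move=> t0 e0; have [G net] := Per_bowen_net hd hT hX x0 e0.
apply: (@squeeze_cvge _ _ _ _ (fun=> 0%E) _ (fun n => ((2 : R)^-1 ^+ n)%:E)).
- apply: nearW => n; rewrite bowenC_ge0 /=.
  exact: bowenC_le_geometric t0 net.
- exact: cvg_cst.
- apply: cvg_EFin; first exact: nearW.
  by apply: cvg_expr; rewrite ger0_norm ?invr_ge0 //; lra.
Qed.

End BowenEntropyPeriodic.

Theorem mainTheorem12 (R : realType) (X : Type) (d : X -> X -> R) (T : X -> X)
  (hd : is_metric d) (hX : mcompact d) (hT : mcontinuous d T) :
  Per T = set0 \/ bowen_h d T (Per T) eps @[eps --> 0^'+] --> 0%E.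
Proof.
have [->|Per_neq0] := EM (Per T = set0); [by left | right].
have [y0 Py0] : Per T !=set0 by apply/set0P/eqP.
apply: cvg_near_cst; apply: filterS (@nbhs_right_gt R 0) => eps e0.
apply: bowen_h_eq0 Py0 _ => t t0.
exact: (bowenC_Per_cvg0 hd hT hX y0 t0 e0).
Qed.
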